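(* There is a universal constant $C>0$ such that for all $q>2$, integers $n,p\ge1$, and $\sigma,B>0$ with $(B^2/\sigma^2)^{q/(q-2)}\,(\ln(2p)/n)>e$, \[ \mathcal{E}_q(\sigma,B)\le C\,B\Big(\frac{\ln(2p)}n\Big)^{1-1/q}\Big[\ln\Big(\frac{B^2}{\sigma^2}\Big(\frac{\ln(2p)}n\Big)^{1-2/q}\Big)\Big]^{1/q-1}. \]
   Context: For independent mean-zero random vectors $\boldsymbol{X}_1,\dots,\boldsymbol{X}_n$ in $\mathbb{R}^p$ with joint law $P^n$, set $\mathcal{V}(P^n)=\max_{1\le j\le p}\frac1n\sum_{i=1}^n\mathbb{E}[X_i(j)^2]$ and $\mathcal{D}_q(P^n)=(\frac1n\sum_{i=1}^n\mathbb{E}[\max_{1\le j\le p}|X_i(j)|^q])^{1/q}$. $\mathcal{E}_q(\sigma,B)$ is the supremum of $\mathbb{E}[\max_{1\le j\le p}|\frac1n\sum_{i=1}^nX_i(j)|]$ over all such laws with $\mathcal{V}(P^n)\le\sigma^2$ and $\mathcal{D}_q(P^n)\le B$. The constant $C$ does not depend on $n,p,q,\sigma,B$. *)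

From HB Require Import structures.
From mathcomp Require Import all_boot all_order all_algebra.
From mathcomp Require Import all_classical all_reals all_analysis.
Set Implicit Arguments. Unset Strict Implicit. Unset Printing Implicit Defensive.
Import Order.TTheory GRing.Theory Num.Theory.
Local Open Scope classical_set_scope.
Local Open Scope ring_scope.

(* A random vector in R^p is represented as Y : T -> 'I_p -> R
   (coordinates Y t j = Y(j)). *)

Definition rvec_sigma (R : realType) (T : Type) (p : nat)
  (Y : T -> 'I_p -> R) : set (set T) :=
  <<s setT, \bigcup_(j in [set: 'I_p])
        preimage_set_system setT (fun t => Y t j) (@measurable _ R) >>.

(* Mutual independence of the random vectors X_1, ..., X_n under P:
   product rule for events E_i in sigma(X_i) (taking E_i = T covers
   every subfamily). *)
Definition indep_rvecs (R : realType) (d : measure_display)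
  (T : measurableType d) (P : probability T R) (n p : nat)
  (X : 'I_n -> T -> 'I_p -> R) : Prop :=
  forall E : 'I_n -> set T, (forall i, rvec_sigma (X i) (E i)) ->
    P (\bigcap_(i in [set: 'I_n]) E i) = (\prod_(i < n) P (E i))%E.

Definition Vvar (R : realType) (d : measure_display)
  (T : measurableType d) (P : probability T R) (n p : nat)
  (X : 'I_n -> T -> 'I_p -> R) : \bar R :=
  (\big[maxe/0%E]_(j < p)
     ((n%:R^-1)%:E * \sum_(i < n) \int[P]_t ((X i t j) ^+ 2)%:E))%E.

Definition Dq (R : realType) (d : measure_display)
  (T : measurableType d) (P : probability T R) (n p : nat)
  (X : 'I_n -> T -> 'I_p -> R) (q : R) : \bar R :=
  poweR ((n%:R^-1)%:E *
     \sum_(i < n) \int[P]_t ((\big[Num.max/0]_(j < p) `|X i t j|) `^ q)%:E)%E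
    q^-1.

Definition Emax (R : realType) (d : measure_display)
  (T : measurableType d) (P : probability T R) (n p : nat)
  (X : 'I_n -> T -> 'I_p -> R) : \bar R :=
  (\int[P]_t (\big[Num.max/0]_(j < p) `|n%:R^-1 * \sum_(i < n) X i t j|)%:E)%E.

From HB Require Import structures.
From mathcomp Require Import all_boot all_order all_algebra.
From mathcomp Require Import all_classical all_reals all_analysis.
From mathcomp Require Import ring lra measurable_realfun.
Set Implicit Arguments. Unset Strict Implicit. Unset Printing Implicit Defensive.
Import Order.TTheory GRing.Theory Num.Theory.
Local Open Scope classical_set_scope.
Local Open Scope ring_scope.

(* Truncate each coordinate at a level M and round it towards 0 onto a grid of
   mesh dl: the rounded coordinates take finitely many values, so the product
   rule for independent events gives the product rule for their exponential
   moments.  For |c| <= lam, the bound e^y <= 1 + y + y^2 e^(lam M) on y <= lam M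
   and E X = 0 give E e^(c Y) <= exp(lam dl + lam E|X| 1_{|X| > M}
   + lam^2 e^(lam M) E X^2), where the tail is at most E max_j |X(j)|^q / M^(q-1).
   A soft maximum over the 2p variables e^(+-lam S_j) of the rounded sums then
   bounds E max_j |n^-1 sum_i X_i(j)| by
   ln(2p)/(n lam) + 2 B^q/M^(q-1) + lam e^(lam M) sigma^2 + 2 dl,
   and dl can be taken arbitrarily small.  With L = ln(2p)/n and
   l = ln(B^2/sigma^2 L^(1-2/q)) > 0, the choice M = B (l/L)^(1/q), lam M = l/2
   makes each term a multiple of B L^(1-1/q) l^(1/q-1), with total factor 12. *)

Section RealInequalities.
Variable R : realType.

Lemma expR_le_quadratic (x K : R) : x <= K -> 0 <= K ->
  expR x <= 1 + x + x ^+ 2 * expR K.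
Proof.
move=> xK K0.
have ex0 : 0 < expR x := expR_gt0 x.
have ex_1x : expR x * (1 - x) <= 1.
  have := ler_wpM2l (ltW ex0) (expR_ge1Dx (- x)).
  by rewrite -expRD addrN expR0 addrC.
have ex_ge := expR_ge1Dx x.
have exK : expR x <= expR K by rewrite ler_expR.
have eK1 : 1 <= expR K by rewrite -expR0 ler_expR.
have [x0|x0] := leP 0 x; last by nra.
have : x * (expR x - 1) <= x * (x * expR K) by apply: ler_wpM2l => //; nra.
nra.
Qed.

Lemma addr1_le_expR_div_ln (x c : R) : 0 < c -> x + 1 <= expR x / c + ln c.
Proof.
move=> c0; have := expR_ge1Dx (x - ln c).
rewrite expRD expRN lnK ?posrE //; lra.
Qed.

Lemma sqr_le_expR_half (l : R) : 0 < l -> l ^+ 2 <= 16 * expR (l / 2).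
Proof.
move=> l0.
have -> : expR (l / 2) = expR (l / 4) ^+ 2 by rewrite expr2 -expRD; congr expR; lra.
have : (l / 4) ^+ 2 <= expR (l / 4) ^+ 2.
  rewrite ler_sqr ?nnegrE ?expR_ge0 //; last lra.
  by have := expR_ge1Dx (l / 4); lra.
rewrite expr_div_n -natrX /=; lra.
Qed.

End RealInequalities.

Lemma measurable_bigmax (R : realType) d (T : measurableType d) (D : set T) k
  (f : 'I_k -> T -> R) : (forall i, measurable_fun D (f i)) ->
  measurable_fun D (fun x => \big[Num.max/0]_(i < k) f i x).
Proof.
elim: k f => [|k ih] f mf.
  by under eq_fun do rewrite big_ord0; exact: measurable_cst.
under eq_fun do rewrite big_ord_recl.
apply: measurable_maxr => //.
exact: (ih (fun i => f (lift ord0 i))).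
Qed.

Section GridRounding.
Variables (R : realType) (dl : R) (N : nat).
Hypothesis dl0 : 0 < dl.

Definition grid_floor (x : R) : R :=
  \big[Num.max/0]_(m < N.+1) (if m%:R * dl <= x then m%:R * dl else 0).

Definition grid : seq R := [seq m%:R * dl | m <- iota 0 N.+1].

Lemma grid_floor_ge0 x : 0 <= grid_floor x.
Proof.
rewrite /grid_floor; elim/big_ind: _ => //.
  by move=> a b a0 b0; rewrite le_max a0.
by move=> i _; case: ifP => // _; rewrite mulr_ge0 // ltW.
Qed.

Lemma grid_floor_le x : 0 <= x -> grid_floor x <= x.
Proof. by move=> x0; apply: bigmax_le => // i _; case: ifP. Qed.

Lemma grid_floor_eq0 x : x <= 0 -> grid_floor x = 0.
Proof.
move=> x0; apply/eqP; rewrite eq_le grid_floor_ge0 andbT.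
by apply: bigmax_le => // i _; case: ifP => // /le_trans; apply.
Qed.

Lemma grid_floor_le_top x : grid_floor x <= N%:R * dl.
Proof.
apply: bigmax_le; first by rewrite mulr_ge0 // ltW.
move=> i _; case: ifP => _; last by rewrite mulr_ge0 // ltW.
by rewrite ler_wpM2r ?(ltW dl0) // ler_nat -ltnS.
Qed.

Lemma grid_floor_gt x : 0 <= x -> x <= N%:R * dl -> x - dl < grid_floor x.
Proof.
move=> x0 xN.
have [m hm] : exists m : nat, Num.floor (x / dl) = m%:Z.
  have : 0 <= Num.floor (x / dl) by rewrite floor_ge0 divr_ge0 // ltW.
  by case: (Num.floor (x / dl)) => // m _; exists m.
have mdl_le : m%:R * dl <= x.
  by rewrite -ler_pdivlMr //; have := floor_le (x / dl); rewrite hm.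
have x_lt : x < (m%:R + 1) * dl.
  by rewrite -ltr_pdivrMr //; have := floorD1_gt (x / dl); rewrite hm intrD.
have mN : (m < N.+1)%N.
  by rewrite ltnS -(ler_nat R) -(ler_pM2r dl0); exact: le_trans mdl_le xN.
apply: (@lt_le_trans _ _ (m%:R * dl)); first lra.
by apply: le_trans (le_bigmax _ _ (Ordinal mN)); rewrite /= mdl_le.
Qed.

Lemma grid_floor_in x : grid_floor x \in grid.
Proof.
have grid0 : 0 \in grid by apply/mapP; exists 0%N; rewrite ?mul0r // mem_iota.
rewrite /grid_floor; elim/big_ind: _ => //.
- by move=> a b ha hb; case: (leP a b).
- move=> i _; case: ifP => // _.
  by apply/mapP; exists (nat_of_ord i); rewrite // mem_iota /= ltn_ord.
Qed.

Lemma measurable_grid_floor : measurable_fun setT grid_floor.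
Proof.
apply: measurable_bigmax => i.
apply: measurable_fun_ifT; last 2 first; try exact: measurable_cst.
by apply: measurable_fun_ler => //; exact: measurable_cst.
Qed.

(* Rounding towards 0 onto the grid [dl * (-N..N)], truncating at [N * dl]. *)
Definition grid_round (x : R) : R := grid_floor x - grid_floor (- x).

Lemma grid_round_ge0 x : 0 <= x -> grid_round x = grid_floor x.
Proof.
by move=> x0; rewrite /grid_round [grid_floor (- x)]grid_floor_eq0 ?subr0 ?oppr_le0.
Qed.

Lemma grid_roundN x : grid_round (- x) = - grid_round x.
Proof. by rewrite /grid_round opprK opprB. Qed.

Lemma normrN_sub_grid_round x : `|- x - grid_round (- x)| = `|x - grid_round x|.
Proof. by rewrite grid_roundN -opprD normrN. Qed.

Lemma norm_grid_round_le x : `|grid_round x| <= `|x|.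
Proof.
wlog x0 : x / 0 <= x.
  move=> wlog; have [/wlog//|/ltW x0] := leP 0 x.
  by rewrite -normrN -grid_roundN -(normrN x) wlog // oppr_ge0.
rewrite grid_round_ge0 // !ger0_norm ?grid_floor_ge0 //; exact: grid_floor_le.
Qed.

Lemma norm_grid_round_le_top x : `|grid_round x| <= N%:R * dl.
Proof.
wlog x0 : x / 0 <= x.
  move=> wlog; have [/wlog//|/ltW x0] := leP 0 x.
  by rewrite -normrN -grid_roundN wlog // oppr_ge0.
by rewrite grid_round_ge0 // ger0_norm ?grid_floor_ge0 // grid_floor_le_top.
Qed.

Lemma norm_sub_grid_round_le x : `|x - grid_round x| <= `|x|.
Proof.
wlog x0 : x / 0 <= x.
  move=> wlog; have [/wlog//|/ltW x0] := leP 0 x.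
  by rewrite -(normrN x) -normrN_sub_grid_round wlog // oppr_ge0.
rewrite grid_round_ge0 // (ger0_norm x0).
have := grid_floor_ge0 x; have := grid_floor_le x0.
rewrite ler_norml; lra.
Qed.

Lemma norm_sub_grid_round_lt x : `|x| <= N%:R * dl -> `|x - grid_round x| < dl.
Proof.
wlog x0 : x / 0 <= x.
  move=> wlog; have [/wlog//|/ltW x0] := leP 0 x.
  by rewrite -(normrN x) -normrN_sub_grid_round; apply: wlog; rewrite oppr_ge0.
rewrite grid_round_ge0 // (ger0_norm x0) => xN.
have := grid_floor_gt x0 xN; have := grid_floor_le x0.
rewrite ltr_norml; lra.
Qed.

Lemma grid_round_in x : grid_round x \in [seq a - b | a <- grid, b <- grid].
Proof.
exact: (allpairs_f (fun a b : R => a - b) (grid_floor_in x) (grid_floor_in (- x))).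
Qed.

Lemma measurable_grid_round : measurable_fun setT grid_round.
Proof.
apply: measurable_funB; first exact: measurable_grid_floor.
by apply: measurableT_comp; [exact: measurable_grid_floor|exact: measurable_funN].
Qed.

End GridRounding.

Lemma indic_bigcap (R : realType) (T : Type) (I : finType) (E : I -> set T) t :
  \1_(\bigcap_(i in [set: I]) E i) t = \prod_i (\1_(E i) t : R).
Proof.
have [h|/existsNP[i Ei]] := pselect (forall i, E i t).
  by rewrite indicE mem_set ?big1 // => i _; rewrite indicE mem_set.
rewrite indicE memNset; last by move=> Et; apply: Ei; exact: Et.
by rewrite (bigD1 i) //= indicE memNset // mul0r.
Qed.

Lemma finite_valued_decomp (R : realType) (T : Type) (F : T -> R) (s : seq R) x :
  F x \in s ->
  F x = \sum_(k < size (undup s)) nth 0 (undup s) k *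
          \1_[set y | F y = nth 0 (undup s) k] x.
Proof.
move=> Fxs; have hk : (index (F x) (undup s) < size (undup s))%N.
  by rewrite index_mem mem_undup.
rewrite (bigD1 (Ordinal hk)) //= big1 ?addr0.
  by rewrite nth_index ?mem_undup // indicE mem_set ?mulr1.
move=> k /eqP hk'; rewrite indicE memNset ?mulr0 // /= => Fk.
by apply: hk'; apply: val_inj; rewrite /= Fk index_uniq ?undup_uniq.
Qed.

Section Independence.
Variables (R : realType) (d : measure_display) (T : measurableType d)
  (P : probability T R) (n p : nat) (X : 'I_n -> T -> 'I_p -> R).
Hypothesis mX : forall i j, measurable_fun setT (fun t => X i t j).
Hypothesis indX : indep_rvecs P X.

Lemma rvec_sigma_preimage i j (B : set R) : measurable B ->
  rvec_sigma (X i) ((fun t => X i t j) @^-1` B).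
Proof.
by move=> mB; apply: sub_gen_smallest; exists j => //; exists B => //; rewrite setTI.
Qed.

Lemma probability_fineK (A : set T) : measurable A -> P A = (fine (P A))%:E.
Proof. by move=> mA; rewrite fineK // fin_num_measure. Qed.

Lemma integral_sum_indic (I : finType) (c : I -> R) (A : I -> set T) :
  (forall k, 0 <= c k) -> (forall k, measurable (A k)) ->
  (\int[P]_t (\sum_k c k * \1_(A k) t)%:E = (\sum_k c k * fine (P (A k)))%:E)%E.
Proof.
move=> c0 mA; under eq_integral do rewrite -sumEFin.
rewrite ge0_integral_sum //; last first.
- by move=> k t _; rewrite lee_fin mulr_ge0.
- move=> k; apply/measurable_EFinP.
  by apply: measurable_funM; [exact: measurable_cst|exact: measurable_indic].
rewrite -sumEFin; apply: eq_bigr => k _; under eq_integral do rewrite EFinM.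
rewrite ge0_integralZl //; try by [rewrite lee_fin |
  move=> t _; rewrite lee_fin indicE | apply/measurable_EFinP; exact: measurable_indic].
by rewrite integral_indic // setIT EFinM -probability_fineK.
Qed.

(* Independence is only assumed for events, so the product rule is first
   proved for nonnegative functions with finitely many values, by expanding
   the product of their indicator decompositions. *)
Lemma indep_integral_prod j (F : 'I_n -> R -> R) (s : seq R) :
  (forall i, measurable_fun setT (F i)) -> (forall i x, F i x \in s) ->
  (forall v, v \in s -> 0 <= v) ->
  (\int[P]_t (\prod_i F i (X i t j))%:E = \prod_i \int[P]_t (F i (X i t j))%:E)%E.
Proof.
move=> mF Fs s0.
pose K := size (undup s); pose v (k : 'I_K) := nth 0 (undup s) k.
pose E i (k : 'I_K) := (fun t => X i t j) @^-1` [set y | F i y = v k].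
have mB i k : measurable [set y | F i y = v k].
  by have := mF i measurableT _ (measurable_set1 (v k)); rewrite setTI.
have mE i k : measurable (E i k).
  by have := mX i j measurableT (mB i k); rewrite setTI.
have v0 k : 0 <= v k.
  by apply: s0; rewrite -mem_undup; apply: mem_nth; exact: ltn_ord.
have decF i t : F i (X i t j) = \sum_k v k * \1_(E i k) t.
  by rewrite (finite_valued_decomp (Fs i (X i t j))).
have -> : (\prod_i \int[P]_t (F i (X i t j))%:E =
    (\prod_i \sum_k v k * fine (P (E i k)))%:E)%E.
  rewrite -prodEFin; apply: eq_bigr => i _.
  under eq_integral do rewrite decF.
  exact: integral_sum_indic.
have -> : (\int[P]_t (\prod_i F i (X i t j))%:E =
   \int[P]_t (\sum_(f : {ffun 'I_n -> 'I_K}) (\prod_i v (f i)) *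
      \1_(\bigcap_(i in [set: 'I_n]) E i (f i)) t)%:E)%E.
  apply: eq_integral => t _; congr (_%:E).
  under eq_bigr do rewrite decF.
  rewrite bigA_distr_bigA; apply: eq_bigr => f _.
  by rewrite big_split /= indic_bigcap.
rewrite integral_sum_indic; last 2 first.
- by move=> f; apply: prodr_ge0 => i _.
- move=> f; apply: fin_bigcap_measurable; first exact: finite_finset.
  by move=> i _; exact: mE.
congr (_%:E); rewrite bigA_distr_bigA; apply: eq_bigr => f _.
rewrite big_split /=; congr (_ * _).
rewrite (@indX (fun i => E i (f i))); last first.
  by move=> i; apply: rvec_sigma_preimage; exact: mB.
by rewrite (eq_bigr _ (fun i _ => probability_fineK (mE i (f i)))) prodEFin.
Qed.

End Independence.

Section ExtendedRealBounds.
Variable R : realType.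
Local Open Scope ereal_scope.

Lemma ge0_le_EFin_fineK (u : \bar R) (b : R) : 0 <= u -> u <= b%:E ->
  u = (fine u)%:E /\ (fine u <= b)%R.
Proof.
move=> u0 ub.
have uf : u \is a fin_num by rewrite ge0_fin_numE // (le_lt_trans ub) // ltry.
by split; [rewrite fineK|rewrite -lee_fin fineK].
Qed.

Lemma ge0_sume_le_fineK (k : nat) (a : 'I_k -> \bar R) (b : R) :
  (forall i, 0 <= a i) -> \sum_(i < k) a i <= b%:E ->
  (forall i, a i = (fine (a i))%:E) /\ (\sum_(i < k) fine (a i) <= b)%R.
Proof.
move=> a0 hb.
have aK i : a i = (fine (a i))%:E.
  apply: (ge0_le_EFin_fineK (a0 i) (le_trans _ hb)).1.
  by rewrite (bigD1 i) //= leeDl // sume_ge0.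
by split => //; rewrite -lee_fin -sumEFin (eq_bigr _ (fun i _ => esym (aK i))).
Qed.

Lemma poweRV_le (z : \bar R) (r B : R) : 0 <= z -> (0 < r)%R ->
  z `^ r^-1 <= B%:E -> z <= (B `^ r)%:E.
Proof.
move=> z0 r0 zB.
rewrite -poweR_EFin -[z](@poweRe1 _ z) // -(mulVf (lt0r_neq0 r0)) poweRrM.
apply: gt0_ler_poweR => //; first exact: ltW.
- by rewrite in_itv /= poweR_ge0 leey.
- by rewrite in_itv /= (le_trans (poweR_ge0 _ _) zB) leey.
Qed.

End ExtendedRealBounds.

Section IntegralAffine.
Variables (R : realType) (d : measure_display) (T : measurableType d)
  (P : probability T R).

Lemma ge0_integral_affine2 (a b c : R) (f g : T -> R) : 0 <= a -> 0 <= b -> 0 <= c ->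
  measurable_fun setT f -> measurable_fun setT g ->
  (forall t, 0 <= f t) -> (forall t, 0 <= g t) ->
  (\int[P]_t (a * f t + b * g t + c)%:E =
    a%:E * \int[P]_t (f t)%:E + b%:E * \int[P]_t (g t)%:E + c%:E)%E.
Proof.
move=> a0 b0 c0 mf mg f0 g0.
have mZ (k : R) (h : T -> R) :
    measurable_fun setT h -> measurable_fun setT (fun t => (k * h t)%:E).
  move=> mh; apply/measurable_EFinP.
  by apply: measurable_funM => //; exact: measurable_cst.
have maf := mZ a f mf; have mbg := mZ b g mg.
have mf' : measurable_fun setT (fun t => (f t)%:E) by exact/measurable_EFinP.
have mg' : measurable_fun setT (fun t => (g t)%:E) by exact/measurable_EFinP.
have f0' t : [set: T] t -> (0 <= (f t)%:E)%E by rewrite lee_fin.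
have g0' t : [set: T] t -> (0 <= (g t)%:E)%E by rewrite lee_fin.
have af0 t : [set: T] t -> (0 <= (a * f t)%:E)%E by rewrite lee_fin mulr_ge0.
have bg0 t : [set: T] t -> (0 <= (b * g t)%:E)%E by rewrite lee_fin mulr_ge0.
have intc : (\int[P]_t c%:E = c%:E)%E.
  by rewrite -[RHS]mule1 -(probability_setT P); exact: integral_cst.
under eq_integral do rewrite !EFinD.
rewrite ge0_integralD //; first last.
- exact: emeasurable_funD.
- by move=> t _; rewrite adde_ge0 ?af0 ?bg0.
rewrite intc ge0_integralD //.
under eq_integral do rewrite EFinM.
rewrite ge0_integralZl ?lee_fin //.
under [X in (_ + X + _)%E]eq_integral do rewrite EFinM.
by rewrite ge0_integralZl ?lee_fin.
Qed.

Lemma ge0_integral_affine (a c : R) (f : T -> R) : 0 <= a -> 0 <= c ->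
  measurable_fun setT f -> (forall t, 0 <= f t) ->
  (\int[P]_t (a * f t + c)%:E = a%:E * \int[P]_t (f t)%:E + c%:E)%E.
Proof.
move=> a0 c0 mf f0.
have := ge0_integral_affine2 a0 (lexx 0) c0 mf mf f0 f0.
rewrite mul0e adde0 => <-; apply: eq_integral => t _.
by rewrite mul0r addr0.
Qed.

End IntegralAffine.

Section MaximalInequality.
Variables (R : realType) (d : measure_display) (T : measurableType d)
  (P : probability T R) (n p : nat) (X : 'I_n -> T -> 'I_p -> R) (q : R).
Hypothesis mX : forall i j, measurable_fun setT (fun t => X i t j).
Hypothesis iX : forall i j, P.-integrable setT (fun t => (X i t j)%:E).
Hypothesis X0 : forall i j, (\int[P]_t (X i t j)%:E = 0)%E.
Hypothesis indX : indep_rvecs P X.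
Hypotheses (q1 : 1 < q) (n0 : (0 < n)%N) (p0 : (0 < p)%N).

Definition Xmax i t := \big[Num.max/0]_(j < p) `|X i t j|.

Lemma le_Xmax i t j : `|X i t j| <= Xmax i t.
Proof. exact: le_bigmax. Qed.

Lemma measurable_Xmax i : measurable_fun setT (Xmax i).
Proof.
apply: measurable_bigmax => j.
by apply: measurableT_comp; [exact: normr_measurable|exact: mX].
Qed.

Lemma measurable_Xmax_powR i : measurable_fun setT (fun t => Xmax i t `^ q).
Proof. exact: measurableT_comp (measurable_powR q) (measurable_Xmax i). Qed.

Variables (Bq s2 : R).
Hypothesis Xmax_moment_bound :
  (\sum_(i < n) \int[P]_t (Xmax i t `^ q)%:E <= (n%:R * Bq)%:E)%E.
Hypothesis sqr_moment_bound : forall j,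
  (\sum_(i < n) \int[P]_t ((X i t j) ^+ 2)%:E <= (n%:R * s2)%:E)%E.

Definition Xmax_moment i := fine (\int[P]_t (Xmax i t `^ q)%:E).
Definition sqr_moment i j := fine (\int[P]_t ((X i t j) ^+ 2)%:E).

Let Xmax_moment_spec :
  (forall i, \int[P]_t (Xmax i t `^ q)%:E = (Xmax_moment i)%:E)%E /\
  \sum_i Xmax_moment i <= n%:R * Bq.
Proof.
apply: ge0_sume_le_fineK Xmax_moment_bound => i.
by apply: integral_ge0 => t _; rewrite lee_fin powR_ge0.
Qed.

Let sqr_moment_spec j :
  (forall i, \int[P]_t ((X i t j) ^+ 2)%:E = (sqr_moment i j)%:E)%E /\
  \sum_i sqr_moment i j <= n%:R * s2.
Proof.
apply: ge0_sume_le_fineK (sqr_moment_bound j) => i.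
by apply: integral_ge0 => t _; rewrite lee_fin sqr_ge0.
Qed.

Lemma integral_Xmax_powRE i :
  (\int[P]_t (Xmax i t `^ q)%:E = (Xmax_moment i)%:E)%E.
Proof. exact: Xmax_moment_spec.1. Qed.

Lemma integral_sqrE i j :
  (\int[P]_t ((X i t j) ^+ 2)%:E = (sqr_moment i j)%:E)%E.
Proof. exact: (sqr_moment_spec j).1. Qed.

Lemma sum_Xmax_moment_le : \sum_i Xmax_moment i <= n%:R * Bq.
Proof. exact: Xmax_moment_spec.2. Qed.

Lemma sum_sqr_moment_le j : \sum_i sqr_moment i j <= n%:R * s2.
Proof. exact: (sqr_moment_spec j).2. Qed.

Let n_gt0 : 0 < n%:R :> R. Proof. by rewrite ltr0n. Qed.

Lemma Bq_ge0 : 0 <= Bq.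
Proof.
rewrite -(pmulr_rge0 _ n_gt0); apply: le_trans sum_Xmax_moment_le.
apply: sumr_ge0 => i _.
by rewrite fine_ge0 // integral_ge0 // => t _; rewrite lee_fin powR_ge0.
Qed.

Lemma s2_ge0 : 0 <= s2.
Proof.
rewrite -(pmulr_rge0 _ n_gt0); apply: le_trans (sum_sqr_moment_le (Ordinal p0)).
apply: sumr_ge0 => i _.
by rewrite fine_ge0 // integral_ge0 // => t _; rewrite lee_fin sqr_ge0.
Qed.

Variables (M lam : R).
Hypotheses (M0 : 0 < M) (lam0 : 0 < lam).

Let K := M `^ (q - 1).
Let K0 : 0 < K. Proof. exact: powR_gt0. Qed.

Section Rounding.
Variable N : nat.
Hypothesis N0 : (0 < N)%N.

Let dl := M / N%:R.
Let dl0 : 0 < dl. Proof. by rewrite divr_gt0 // ltr0n. Qed.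
Let Ndl_eq : N%:R * dl = M.
Proof. by rewrite /dl mulrC -mulrA mulVf ?mulr1 // pnatr_eq0 -lt0n. Qed.

Let Y i j t := grid_round dl N (X i t j).

Lemma measurable_round i j : measurable_fun setT (Y i j).
Proof. exact: measurableT_comp (measurable_grid_round dl N) (mX i j). Qed.

(* Below the truncation level the rounding error is at most [dl]; above it,
   [|X| <= Xmax <= Xmax ^ q / M ^ (q - 1)]. *)
Lemma norm_sub_round_le i j t : `|X i t j - Y i j t| <= dl + Xmax i t `^ q / K.
Proof.
rewrite /Y; set x := X i t j.
have hQ : 0 <= Xmax i t `^ q / K by rewrite divr_ge0 ?powR_ge0 // ltW.
have [xM|xM] := leP `|x| M.
  apply/ltW/(lt_le_trans (norm_sub_grid_round_lt dl0 _)); first by rewrite Ndl_eq.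
  by rewrite lerDl.
apply: le_trans (norm_sub_grid_round_le N dl0 x) _.
apply: le_trans (_ : Xmax i t `^ q / K <= _); last by rewrite lerDr ltW.
have xX : `|x| <= Xmax i t := le_Xmax i t j.
have MX : M < Xmax i t := lt_le_trans xM xX.
have X0' : 0 < Xmax i t := lt_trans M0 MX.
apply: le_trans xX _.
rewrite -(mulr_powRB1 (ltW X0') (lt_trans ltr01 q1)) -mulrA ler_peMr ?(ltW X0') //.
by rewrite ler_pdivlMr // mul1r ge0_ler_powR ?nnegrE ?subr_ge0 ?ltW.
Qed.

Let E0 := expR (lam * M).

Lemma expR_mul_round_le i j c t : `|c| <= lam ->
  expR (c * Y i j t) <= c * X i t j +
    (lam / K * Xmax i t `^ q + lam ^+ 2 * E0 * (X i t j) ^+ 2 + (1 + lam * dl)).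
Proof.
move=> hc; set x := X i t j; set y := Y i j t; set Q := Xmax i t `^ q.
have y_le_M : `|y| <= M by rewrite -Ndl_eq; exact: norm_grid_round_le_top.
have y_le_x : `|y| <= `|x| := norm_grid_round_le N dl0 x.
have xy : `|x - y| <= dl + Q / K := norm_sub_round_le i j t.
have cy_le : c * y <= lam * M.
  by apply: le_trans (ler_norm _) _; rewrite normrM; apply: ler_pM.
have quad : expR (c * y) <= 1 + c * y + (c * y) ^+ 2 * E0.
  exact: expR_le_quadratic cy_le (mulr_ge0 (ltW lam0) (ltW M0)).
have cy_cx : c * y <= c * x + lam * (dl + Q / K).
  have : - (c * (x - y)) <= lam * (dl + Q / K).
    by apply: le_trans (ler_norm _) _; rewrite normrN normrM; apply: ler_pM.
  rewrite mulrBr; lra.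
have cy2 : (c * y) ^+ 2 * E0 <= lam ^+ 2 * E0 * x ^+ 2.
  rewrite [leRHS]mulrAC; apply: ler_wpM2r; first exact: expR_ge0.
  rewrite -real_normK ?num_real // -[x ^+ 2]real_normK ?num_real // -exprMn.
  by rewrite lerXn2r ?nnegrE ?mulr_ge0 ?(ltW lam0) // normrM ler_pM.
have e : lam * (dl + Q / K) = lam / K * Q + lam * dl.
  by rewrite mulrDr addrC mulrA mulrAC.
rewrite e in cy_cx; lra.
Qed.

Let a i j := lam * (dl + Xmax_moment i / K) + lam ^+ 2 * E0 * sqr_moment i j.

Lemma mgf_round_le i j c : `|c| <= lam ->
  (\int[P]_t (expR (c * Y i j t))%:E <= (1 + a i j)%:E)%E.
Proof.
move=> hc.
pose h t := lam / K * Xmax i t `^ q + lam ^+ 2 * E0 * (X i t j) ^+ 2 + (1 + lam * dl).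
have mh : measurable_fun setT h.
  apply: measurable_funD; last exact: measurable_cst.
  apply: measurable_funD; apply: measurable_funM; try exact: measurable_cst.
    exact: measurable_Xmax_powR.
  exact: measurable_funX.
have la0 : 0 <= lam / K by rewrite divr_ge0 // ltW.
have lb0 : 0 <= lam ^+ 2 * E0 by rewrite mulr_ge0 ?expR_ge0 ?sqr_ge0.
have lc0 : 0 <= 1 + lam * dl by rewrite addr_ge0 // mulr_ge0 // ltW.
have inth : (\int[P]_t (h t)%:E =
    (lam / K * Xmax_moment i + lam ^+ 2 * E0 * sqr_moment i j + (1 + lam * dl))%:E)%E.
  rewrite ge0_integral_affine2 //; first last.
  - by move=> t; exact: sqr_ge0.
  - by move=> t; exact: powR_ge0.
  - exact: measurable_funX.
  - exact: measurable_Xmax_powR.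
  by rewrite integral_Xmax_powRE integral_sqrE -!EFinM -!EFinD.
have h0 t : 0 <= h t.
  by rewrite /h addr_ge0 // addr_ge0 // mulr_ge0 // ?powR_ge0 ?sqr_ge0.
have ih : P.-integrable setT (fun t => (h t)%:E).
  apply/integrableP; split; first exact/measurable_EFinP.
  under eq_integral do rewrite gee0_abs ?lee_fin ?h0 //.
  by rewrite inth ltry.
have icX : P.-integrable setT (fun t => (c * X i t j)%:E).
  under eq_fun do rewrite EFinM; exact: integrableZl.
apply: (@le_trans _ _ (\int[P]_t ((c * X i t j)%:E + (h t)%:E))%E).
  apply: ge0_le_integral => //.
  - apply/measurable_EFinP; apply: measurableT_comp; first exact: measurable_expR.
    by apply: measurable_funM; [exact: measurable_cst|exact: measurable_round].
  - apply: emeasurable_funD; apply/measurable_EFinP => //.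
    by apply: measurable_funM => //; exact: measurable_cst.
  - by move=> t _; rewrite -EFinD lee_fin; exact: expR_mul_round_le.
rewrite integralD //; under eq_integral do rewrite EFinM.
rewrite integralZl // X0 mule0 add0e inth lee_fin /a; lra.
Qed.

Let S j t := \sum_i Y i j t.

Lemma measurable_sum_round j : measurable_fun setT (S j).
Proof. by apply: measurable_sum => i; exact: measurable_round. Qed.

Let G := lam * (n%:R * dl + n%:R * Bq / K) + lam ^+ 2 * E0 * (n%:R * s2).

Lemma sum_a_le j : \sum_i a i j <= G.
Proof.
rewrite /a big_split /= -!mulr_sumr /G.
apply: lerD.
  apply: ler_wpM2l; first exact: ltW.
  rewrite big_split /= sumr_const card_ord mulr_natl lerD2l -mulr_suml.
  by apply: ler_wpM2r; [rewrite invr_ge0 ltW|exact: sum_Xmax_moment_le].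
by apply: ler_wpM2l; [rewrite mulr_ge0 ?expR_ge0 ?sqr_ge0|exact: sum_sqr_moment_le].
Qed.

Lemma mgf_sum_round_le j c : `|c| <= lam ->
  (\int[P]_t (expR (c * S j t))%:E <= (expR G)%:E)%E.
Proof.
move=> hc.
under eq_integral do rewrite /S /Y mulr_sumr expR_sum.
rewrite (indep_integral_prod mX indX j (F := fun _ x => expR (c * grid_round dl N x))
  (s := map (fun v => expR (c * v))
    [seq a - b | a <- grid dl N, b <- grid dl N])); first last.
- by move=> v /mapP [w _ ->]; exact: expR_ge0.
- by move=> i x; exact: (map_f (fun v => expR (c * v)) (grid_round_in dl N x)).
- move=> i; apply: measurableT_comp; first exact: measurable_expR.
  by apply: measurable_funM; [exact: measurable_cst|exact: measurable_grid_round].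
have mgf_ge0 i : (0 <= \int[P]_t (expR (c * Y i j t))%:E)%E.
  by apply: integral_ge0 => t _; rewrite lee_fin expR_ge0.
have mgf_fin i := ge0_le_EFin_fineK (mgf_ge0 i) (mgf_round_le i j hc).
rewrite (eq_bigr _ (fun i _ => (mgf_fin i).1)) prodEFin lee_fin.
apply: le_trans (_ : \prod_i expR (a i j) <= _); last first.
  by rewrite -expR_sum ler_expR sum_a_le.
apply: ler_prod => i _; rewrite fine_ge0 //=.
exact: le_trans (mgf_fin i).2 (expR_ge1Dx _).
Qed.

Let Smax t := \big[Num.max/0]_(j < p) `|S j t|.

Lemma measurable_Smax : measurable_fun setT Smax.
Proof.
apply: measurable_bigmax => j.
by apply: measurableT_comp; [exact: normr_measurable|exact: measurable_sum_round].
Qed.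

Lemma Smax_ge0 t : 0 <= Smax t.
Proof. by rewrite /Smax; elim/big_ind: _ => // x y hx hy; rewrite le_max hx. Qed.

Let W t := \sum_(j < p) (expR (lam * S j t) + expR (- lam * S j t)).

Lemma measurable_W : measurable_fun setT W.
Proof.
apply: measurable_sum => j; apply: measurable_funD;
  (apply: measurableT_comp; first exact: measurable_expR);
  by apply: measurable_funM; [exact: measurable_cst|exact: measurable_sum_round].
Qed.

Lemma W_ge0 t : 0 <= W t.
Proof. by apply: sumr_ge0 => j _; rewrite addr_ge0 ?expR_ge0. Qed.

Lemma expR_Smax_le t : expR (lam * Smax t) <= W t.
Proof.
rewrite /Smax.
have [j _ ->] := @eq_bigmax _ _ _ 0 (Ordinal p0) xpredT (fun j => `|S j t|) isT
  (fun i _ => normr_ge0 _).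
rewrite /W (bigD1 j) //=.
apply: (@le_trans _ _ (expR (lam * S j t) + expR (- lam * S j t))); last first.
  by rewrite lerDl; apply: sumr_ge0 => k _; rewrite addr_ge0 ?expR_ge0.
have [S0|S0] := leP 0 (S j t).
  by rewrite ger0_norm // lerDl expR_ge0.
by rewrite ltr0_norm // mulrN -mulNr lerDr expR_ge0.
Qed.

Lemma integral_W_le : (\int[P]_t (W t)%:E <= (2 * p%:R * expR G)%:E)%E.
Proof.
have me (c : R) j : measurable_fun setT (fun t => (expR (c * S j t))%:E).
  apply/measurable_EFinP; apply: measurableT_comp; first exact: measurable_expR.
  by apply: measurable_funM; [exact: measurable_cst|exact: measurable_sum_round].
rewrite /W; under eq_integral do rewrite -sumEFin.
rewrite ge0_integral_sum //; last first.
  by move=> j; under eq_fun do rewrite EFinD; exact: emeasurable_funD.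
rewrite (_ : 2 * p%:R * expR G = \sum_(j < p) 2 * expR G); last first.
  by rewrite sumr_const card_ord -mulr_natl; ring.
rewrite -sumEFin; apply: lee_sum => j _.
under eq_integral do rewrite EFinD.
rewrite ge0_integralD //; try by move=> t _; rewrite lee_fin expR_ge0.
rewrite -[2]/(1 + 1) mulrDl mul1r EFinD.
by apply: leeD; apply: mgf_sum_round_le; rewrite ?normrN ger0_norm // ltW.
Qed.

Lemma G_ge0 : 0 <= G.
Proof.
apply: addr_ge0; apply: mulr_ge0.
- exact: ltW.
- by rewrite addr_ge0 ?divr_ge0 ?mulr_ge0 ?Bq_ge0 ?ler0n // ltW.
- by rewrite mulr_ge0 ?expR_ge0 ?sqr_ge0.
- by rewrite mulr_ge0 ?ler0n ?s2_ge0.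
Qed.

(* Soft maximum: [lam * Smax] is controlled by [ln W], and [x + 1 <= e^x / c + ln c]
   linearises the logarithm at [c = 2 p e^G]. *)
Lemma integral_Smax_le :
  (\int[P]_t (Smax t)%:E <= ((ln (2 * p%:R) + G) / lam)%:E)%E.
Proof.
set c0 := 2 * p%:R * expR G.
have p1 : 1 <= p%:R :> R by rewrite ler1n.
have eG1 : 1 <= expR G by rewrite -expR0 ler_expR G_ge0.
have c01 : 1 <= c0 by rewrite /c0 -[1]mulr1 ler_pM // -[1]mul1r ler_pM //; lra.
have c00 : 0 < c0 by lra.
have lnc0 : ln c0 = ln (2 * p%:R) + G.
  by rewrite /c0 lnM ?expRK // posrE ?expR_gt0 //; lra.
have lnc0_ge0 : 0 <= ln c0 by rewrite ln_ge0.
have ic0 : 0 <= c0^-1 by rewrite invr_ge0 ltW.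
have pw t : lam * Smax t + 1 <= c0^-1 * W t + ln c0.
  apply: le_trans (addr1_le_expR_div_ln (lam * Smax t) c00) _.
  by rewrite lerD2r mulrC ler_wpM2l // expR_Smax_le.
have h1 : (\int[P]_t (lam * Smax t + 1)%:E <= \int[P]_t (c0^-1 * W t + ln c0)%:E)%E.
  apply: ge0_le_integral => //.
  - by move=> t _; rewrite lee_fin addr_ge0 // mulr_ge0 ?Smax_ge0 // ltW.
  - apply/measurable_EFinP; apply: measurable_funD; last exact: measurable_cst.
    by apply: measurable_funM; [exact: measurable_cst|exact: measurable_Smax].
  - apply/measurable_EFinP; apply: measurable_funD; last exact: measurable_cst.
    by apply: measurable_funM; [exact: measurable_cst|exact: measurable_W].
  - by move=> t _; rewrite lee_fin.
rewrite (ge0_integral_affine P (ltW lam0) ler01 measurable_Smax Smax_ge0) in h1.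
rewrite (ge0_integral_affine P ic0 lnc0_ge0 measurable_W W_ge0) in h1.
have h2 : (c0^-1%:E * \int[P]_t (W t)%:E <= 1%:E)%E.
  apply: le_trans (lee_wpmul2l _ integral_W_le) _; first by rewrite lee_fin.
  by rewrite -EFinM lee_fin mulVf // gt_eqF.
have h3 := le_trans h1 (leeD2r _ h2).
have I0 : (0 <= \int[P]_t (Smax t)%:E)%E.
  by apply: integral_ge0 => t _; rewrite lee_fin Smax_ge0.
move: h3 I0; case: (\int[P]_t (Smax t)%:E)%E => [r| |] //=.
  rewrite -EFinM -!EFinD !lee_fin => h3 r0.
  rewrite ler_pdivlMr // -lnc0; lra.
by rewrite mulry gtr0_sg // mul1e.
Qed.

Lemma Emax_integrand_le t :
  \big[Num.max/0]_(j < p) `|n%:R^-1 * \sum_i X i t j| <=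
  n%:R^-1 * Smax t + (n%:R^-1 / K) * (\sum_i Xmax i t `^ q) + dl.
Proof.
have sQ : 0 <= \sum_i Xmax i t `^ q by apply: sumr_ge0 => i _; exact: powR_ge0.
apply: bigmax_le.
  by rewrite !addr_ge0 ?mulr_ge0 ?divr_ge0 ?invr_ge0 ?Smax_ge0 ?ler0n // ltW.
move=> j _.
have -> : \sum_i X i t j = S j t + \sum_i (X i t j - Y i j t).
  by rewrite -big_split /=; apply: eq_bigr => i _; rewrite addrC subrK.
rewrite normrM ger0_norm ?invr_ge0 ?ler0n //.
have h1 : `|S j t + \sum_i (X i t j - Y i j t)| <=
    Smax t + (n%:R * dl + (\sum_i Xmax i t `^ q) / K).
  apply: le_trans (ler_normD _ _) _; apply: lerD.
    exact: (le_bigmax _ (fun j => `|S j t|) j).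
  apply: le_trans (ler_norm_sum _ _ _) _.
  apply: le_trans (ler_sum _ (fun i _ => norm_sub_round_le i j t)) _.
  by rewrite big_split /= sumr_const card_ord mulr_natl -mulr_suml.
apply: le_trans (ler_wpM2l _ h1) _; first by rewrite invr_ge0 ler0n.
rewrite le_eqVlt; apply/orP; left; apply/eqP.
by field; rewrite gt_eqF ?ltr0n // gt_eqF.
Qed.

Lemma Emax_le_rounded : (Emax P X <=
  (ln (2 * p%:R) / n%:R / lam + 2 * dl + 2 * (Bq / K) + lam * E0 * s2)%:E)%E.
Proof.
have mQs : measurable_fun setT (fun t => \sum_i Xmax i t `^ q).
  by apply: measurable_sum => i; exact: measurable_Xmax_powR.
have Qs0 t : 0 <= \sum_i Xmax i t `^ q by apply: sumr_ge0 => i _; exact: powR_ge0.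
have ia : 0 <= n%:R^-1 :> R by rewrite invr_ge0 ler0n.
have ib : 0 <= n%:R^-1 / K by rewrite divr_ge0 // ltW.
have step1 : (Emax P X <= \int[P]_t (n%:R^-1 * Smax t +
    (n%:R^-1 / K) * (\sum_i Xmax i t `^ q) + dl)%:E)%E.
  apply: ge0_le_integral => //.
  - move=> t _; rewrite lee_fin.
    by elim/big_ind: _ => // x y hx hy; rewrite le_max hx.
  - apply/measurable_EFinP; apply: measurable_bigmax => j.
    apply: measurableT_comp; first exact: normr_measurable.
    apply: measurable_funM; first exact: measurable_cst.
    by apply: measurable_sum => i; exact: mX.
  - apply/measurable_EFinP; apply: measurable_funD; last exact: measurable_cst.
    apply: measurable_funD; apply: measurable_funM => //; try exact: measurable_cst.
    exact: measurable_Smax.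
  - by move=> t _; rewrite lee_fin; exact: Emax_integrand_le.
rewrite (ge0_integral_affine2 P ia ib (ltW dl0) measurable_Smax mQs Smax_ge0 Qs0)
  in step1.
have hsum : (\int[P]_t (\sum_i Xmax i t `^ q)%:E = (\sum_i Xmax_moment i)%:E)%E.
  under eq_integral do rewrite -sumEFin.
  rewrite ge0_integral_sum //; try by [move=> i t _; rewrite lee_fin powR_ge0 |
    move=> i; apply/measurable_EFinP; exact: measurable_Xmax_powR].
  by rewrite -sumEFin; apply: eq_bigr => i _; rewrite integral_Xmax_powRE.
rewrite hsum in step1.
apply: le_trans step1 _.
apply: (@le_trans _ _ ((n%:R^-1 * ((ln (2 * p%:R) + G) / lam))%:E +
   (n%:R^-1 / K * (n%:R * Bq))%:E + dl%:E)%E).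
  apply: leeD => //; apply: leeD.
    by rewrite EFinM; apply: lee_wpmul2l; [rewrite lee_fin|exact: integral_Smax_le].
  by rewrite -EFinM lee_fin; apply: ler_wpM2l => //; exact: sum_Xmax_moment_le.
rewrite -!EFinD lee_fin /G le_eqVlt; apply/orP; left; apply/eqP.
by field; rewrite !gt_eqF ?ltr0n.
Qed.

End Rounding.

Lemma Emax_le : (Emax P X <=
  (ln (2 * p%:R) / n%:R / lam + 2 * (Bq / K) + lam * expR (lam * M) * s2)%:E)%E.
Proof.
apply/lee_addgt0Pr => eps eps0.
pose N := (Num.Def.archi_bound (2 * M / eps)).+1.
have N_gt : 2 * M / eps < N%:R.
  apply: lt_le_trans (archi_boundP _) _; first by rewrite divr_ge0 // ltW // mulr_gt0.
  by rewrite ler_nat.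
have dl_le : 2 * (M / N%:R) <= eps.
  have h1 : 2 * M < N%:R * eps by rewrite -ltr_pdivrMr.
  rewrite mulrA ler_pdivrMr ?ltr0n //; lra.
apply: le_trans (@Emax_le_rounded N (ltn0Sn _)) _.
rewrite -EFinD lee_fin; lra.
Qed.

End MaximalInequality.

Lemma gt0_powRE (R : realType) (x a : R) : 0 < x -> x `^ a = expR (a * ln x).
Proof. by move=> x0; rewrite /powR gt_eqF. Qed.

Lemma powR_mulNexpR_le (R : realType) (l a : R) : 0 < l -> 0 <= a <= 2 ->
  l `^ a * expR (- (l / 2)) <= 16.
Proof.
move=> l0 /andP[a0 a2].
have e0 : 0 < expR (- (l / 2)) := expR_gt0 _.
have [l1|l1] := leP l 1.
  have la1 : l `^ a <= 1 by rewrite -(powRr0 l) ger_powR ?l0.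
  have e1 : expR (- (l / 2)) <= 1 by rewrite expR_le1; lra.
  by apply: le_trans (ler_pM (powR_ge0 _ _) (ltW e0) la1 e1) _; rewrite mulr1; lra.
have la2 : l `^ a <= l ^+ 2 by rewrite -powR_mulrn ?ler_powR ?(ltW l1) // ltW.
apply: le_trans (ler_wpM2r (ltW e0) la2) _.
by rewrite expRN ler_pdivrMr ?expR_gt0 // sqr_le_expR_half.
Qed.

Lemma ln_sqr_div_mul_powR (R : realType) (B s L u : R) :
  0 < B -> 0 < s -> 0 < L ->
  ln (B ^+ 2 / s ^+ 2 * L `^ u) = 2 * ln B - 2 * ln s + u * ln L.
Proof.
move=> B0 s0 L0.
rewrite lnM ?posrE ?divr_gt0 ?exprn_gt0 ?powR_gt0 // ln_powR.
rewrite lnM ?posrE ?invr_gt0 ?exprn_gt0 // lnV ?posrE ?exprn_gt0 // !lnXn //; lra.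
Qed.

(* With [lam * M = l / 2], each of the three error terms of [Emax_le] is a
   multiple of [tau]; everything is computed on logarithms. *)
Lemma parameter_choice_terms (R : realType) (q B s L : R) :
  2 < q -> 0 < B -> 0 < s -> 0 < L ->
  let l := ln (B ^+ 2 / s ^+ 2 * L `^ (1 - 2 / q)) in 0 < l ->
  let M := B * (l / L) `^ q^-1 in let lam := l / (2 * M) in
  let tau := B * L `^ (1 - q^-1) * l `^ (q^-1 - 1) in
  [/\ L / lam = 2 * tau, B `^ q / M `^ (q - 1) = tau &
      lam * expR (lam * M) * s ^+ 2 =
        tau / 2 * (l `^ (2 * (1 - q^-1)) * expR (- (l / 2)))].
Proof.
move=> q2 B0 s0 L0 l l0 M lam tau.
set r := q^-1.
have qr : q * r = 1 by rewrite /r mulfV // gt_eqF //; lra.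
set A := ln L; set b := ln B; set g := ln s; set m := ln l.
have [eL eB es el] : [/\ L = expR A, B = expR b, s = expR g & l = expR m].
  by split; rewrite lnK ?posrE.
have hl : l = 2 * b - 2 * g + (1 - 2 * r) * A.
  by rewrite /l ln_sqr_div_mul_powR // -/A -/b -/g /r; lra.
have ME : M = expR (b + r * (m - A)).
  rewrite /M gt0_powRE ?divr_gt0 // lnM ?posrE ?invr_gt0 // lnV ?posrE // -/m -/A.
  by rewrite expRD -eB.
have tauE : tau = expR (b + (1 - r) * A + (r - 1) * m).
  by rewrite /tau !gt0_powRE // -/A -/m !expRD -eB.
have lamM : lam * M = l / 2 by rewrite /lam; field; rewrite ME gt_eqF ?expR_gt0.
have lamE : lam = expR (m - b - r * (m - A)) / 2.
  rewrite /lam ME {1}el invfM -expRN mulrCA -expRD mulrC.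
  by congr (expR _ / 2); lra.
rewrite tauE; split.
- rewrite lamE invf_div -expRN eL mulrCA -expRD; congr (_ * expR _); lra.
- rewrite ME eB -!expRM -expRN -expRD; congr expR.
  have h1 : q * r * m = m by rewrite qr mul1r.
  have h2 : q * r * A = A by rewrite qr mul1r.
  lra.
- rewrite lamM lamE gt0_powRE // -/m es -expRM_natl.
  have e : m - b - r * (m - A) + l / 2 + 2 * g =
      b + (1 - r) * A + (r - 1) * m + (2 * (1 - r) * m - l / 2) by lra.
  apply: (@etrans _ _ (expR (m - b - r * (m - A) + l / 2 + 2 * g) / 2)).
    by rewrite !expRD; ring.
  by rewrite e !expRD; ring.
Qed.

Lemma parameter_choice (R : realType) (q B s L : R) :
  2 < q -> 0 < B -> 0 < s -> 0 < L ->
  let l := ln (B ^+ 2 / s ^+ 2 * L `^ (1 - 2 / q)) in 0 < l ->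
  exists M lam, [/\ 0 < M, 0 < lam &
    L / lam + 2 * (B `^ q / M `^ (q - 1)) + lam * expR (lam * M) * s ^+ 2 <=
    12 * B * L `^ (1 - q^-1) * l `^ (q^-1 - 1)].
Proof.
move=> q2 B0 s0 L0 l l0.
have [] := parameter_choice_terms q2 B0 s0 L0 l0; rewrite -/l => t1 t2 t3.
have M0 : 0 < B * (l / L) `^ q^-1 by rewrite mulr_gt0 ?powR_gt0 ?divr_gt0.
exists (B * (l / L) `^ q^-1), (l / (2 * (B * (l / L) `^ q^-1))).
split => //; first exact: divr_gt0 l0 (mulr_gt0 (ltr0Sn _ 1) M0).
have r1 : 0 <= 2 * (1 - q^-1) <= 2.
  have r0 : 0 < q^-1 by rewrite invr_gt0; lra.
  have : q^-1 <= 1 by rewrite invf_le1; lra.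
  by move=> r1; apply/andP; split; lra.
have tau0 : 0 <= B * L `^ (1 - q^-1) * l `^ (q^-1 - 1) / 2.
  by rewrite !mulr_ge0 ?powR_ge0 ?invr_ge0 // ltW.
have := ler_wpM2l tau0 (powR_mulNexpR_le l0 r1).
rewrite t1 t2 t3 -!mulrA; lra.
Qed.

Section MomentBounds.
Variables (R : realType) (d : measure_display) (T : measurableType d)
  (P : probability T R) (n p : nat) (X : 'I_n -> T -> 'I_p -> R).
Hypothesis n0 : (0 < n)%N.

Lemma Vvar_le_sum (s2 : R) : (Vvar P X <= s2%:E)%E -> forall j,
  (\sum_(i < n) \int[P]_t ((X i t j) ^+ 2)%:E <= (n%:R * s2)%:E)%E.
Proof.
move=> hV j; rewrite EFinM -lee_pdivrMl ?ltr0n //.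
by apply: le_trans hV; exact: (le_bigmax _ (fun j => _)).
Qed.

Lemma Dq_le_sum (q B : R) : 0 < q -> 0 < B -> (Dq P X q <= B%:E)%E ->
  (\sum_(i < n) \int[P]_t (Xmax X i t `^ q)%:E <= (n%:R * B `^ q)%:E)%E.
Proof.
move=> q0 B0 hD; rewrite EFinM -lee_pdivrMl ?ltr0n //.
apply: poweRV_le hD => //; rewrite mule_ge0 ?lee_fin ?invr_ge0 ?ler0n //.
by apply: sume_ge0 => i _; apply: integral_ge0 => t _; rewrite lee_fin powR_ge0.
Qed.

End MomentBounds.

Lemma ln_gt0_of_exponent_condition (R : realType) (q a L : R) :
  2 < q -> 0 < a -> 0 < L -> expR 1 < a `^ (q / (q - 2)) * L ->
  0 < ln (a * L `^ (1 - 2 / q)).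
Proof.
move=> q2 a0 L0 h.
have u0 : 0 < 1 - 2 / q by rewrite subr_gt0 ltr_pdivrMr; lra.
have uc : (1 - 2 / q) * (q / (q - 2)) = 1.
  by field; apply/andP; split; rewrite gt_eqF //; lra.
rewrite -(ltr_ln (expR_gt0 _)) ?posrE ?mulr_gt0 ?powR_gt0 // in h.
rewrite expRK lnM ?posrE ?powR_gt0 // ln_powR in h.
rewrite lnM ?posrE ?powR_gt0 // ln_powR.
move: h; rewrite -(ltr_pM2l u0) mulrDr mulrA uc mul1r mulr1 => h; lra.
Qed.

Theorem proposition4p4 (R : realType) :
  exists C : R, 0 < C /\
  forall (q : R) (n p : nat) (sigma B : R),
    2 < q -> (1 <= n)%N -> (1 <= p)%N -> 0 < sigma -> 0 < B ->
    expR 1 < (B ^+ 2 / sigma ^+ 2) `^ (q / (q - 2)) * (ln (2 * p%:R) / n%:R) ->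
    forall (d : measure_display) (T : measurableType d) (P : probability T R)
           (X : 'I_n -> T -> 'I_p -> R),
      (forall i j, measurable_fun setT (fun t => X i t j)) ->
      (forall i j, P.-integrable setT (fun t => (X i t j)%:E)) ->
      (forall i j, (\int[P]_t (X i t j)%:E = 0)%E) ->
      indep_rvecs P X ->
      (Vvar P X <= (sigma ^+ 2)%:E)%E ->
      (Dq P X q <= B%:E)%E ->
      (Emax P X <=
        (C * B * (ln (2 * p%:R) / n%:R) `^ (1 - q^-1)
           * (ln ((B ^+ 2 / sigma ^+ 2) * (ln (2 * p%:R) / n%:R) `^ (1 - 2 / q)))
               `^ (q^-1 - 1))%:E)%E.
Proof.
exists 12; split => // q n p sigma B q2 n1 p1 s0 B0 hcond d T P X mX iX X0 indX hV hD.
have L0 : 0 < ln (2 * p%:R) / n%:R :> R.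
  apply: divr_gt0; last by rewrite ltr0n.
  apply: ln_gt0; have : 1 <= p%:R :> R by rewrite ler1n.
  lra.
have a0 : 0 < B ^+ 2 / sigma ^+ 2 by rewrite divr_gt0 ?exprn_gt0.
have l0 := ln_gt0_of_exponent_condition q2 a0 L0 hcond.
have [M [lam [M0 lam0 hle]]] := parameter_choice q2 B0 s0 L0 l0.
have q1 : 1 < q by lra.
have hXq := Dq_le_sum n1 (lt_trans ltr01 q1) B0 hD.
have hX2 := Vvar_le_sum n1 hV.
have := Emax_le mX iX X0 indX q1 n1 p1 hXq hX2 M0 lam0.
move/le_trans; apply; rewrite lee_fin.
exact: hle.
Qed.
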